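(* Let $T$ be a tree and let $f_0,f_t$ be token-placements of $T$ with colors $\{1,2\}$ having the same number of color-1 tokens. For an edge $e=xy$ let $T(x)$ be the component of $T-e$ containing $x$ and $\mathrm{diff}(e)=\bigl|\,|\{v\in T(x): f_0(v)=1\}|-|\{v\in T(x): f_t(v)=1\}|\,\bigr|$. Then $\mathrm{OPT}(f_0,f_t)=\sum_{e\in E(T)}\mathrm{diff}(e)$.
   Context: A token-placement of a graph $G=(V,E)$ with colors $C=\{1,\dots,c\}$ is a surjective map $f\colon V\to C$. Two distinct token-placements $f,f'$ are adjacent if there is an edge $uv\in E$ with $f'(u)=f(v)$, $f'(v)=f(u)$ and $f'(w)=f(w)$ for all other $w$. A swapping sequence between $f$ and $f'$ is a sequence $f_1=f,\dots,f_h=f'$ of token-placements with consecutive members adjacent; its length is $h-1$. $\mathrm{OPT}(f,f')$ is the minimum length of such a sequence. *)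

From mathcomp Require Import all_boot all_order all_algebra.
Set Implicit Arguments. Unset Strict Implicit. Unset Printing Implicit Defensive.

Section Defs.
Variable T : finType.

Definition simple_graph (e : rel T) : Prop :=
  symmetric e /\ irreflexive e.

Definition remove_edge (e : rel T) (x y : T) : rel T :=
  fun a b => e a b && ~~ (((a == x) && (b == y)) || ((a == y) && (b == x))).

(* Tree: connected simple graph with no cycle, i.e. every edge is a bridge. *)
Definition is_tree (e : rel T) : Prop :=
  simple_graph e /\ (forall x y, connect e x y) /\
  (forall x y, e x y -> ~~ connect (remove_edge e x y) x y).

Definition token_placement (c : nat) (f : T -> nat) : Prop :=
  (forall v, 1 <= f v <= c) /\ (forall i, 1 <= i <= c -> exists v, f v = i).

Definition adjacent (e : rel T) (f g : T -> nat) : Prop :=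
  f <> g /\ exists u v, [/\ e u v, g u = f v, g v = f u &
                          forall w, w <> u -> w <> v -> g w = f w].

Inductive swap_seq (c : nat) (e : rel T) : (T -> nat) -> (T -> nat) -> nat -> Prop :=
| swap_nil f : token_placement c f -> swap_seq c e f f 0
| swap_cons f g h n : token_placement c f -> adjacent e f g ->
    swap_seq c e g h n -> swap_seq c e f h n.+1.

Definition is_OPT (c : nat) (e : rel T) (f f' : T -> nat) (n : nat) : Prop :=
  swap_seq c e f f' n /\ (forall m, swap_seq c e f f' m -> n <= m).

Definition ones_in_comp (e : rel T) (x y : T) (f : T -> nat) : nat :=
  #|[set v | connect (remove_edge e x y) x v & f v == 1]|.

Definition diff_edge (e : rel T) (f0 ft : T -> nat) (x y : T) : nat :=
  `|ones_in_comp e x y f0 - ones_in_comp e x y ft|%N.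

End Defs.

From mathcomp Require Import all_boot all_order all_algebra zify.
From mathcomp Require Import fingroup perm.
From Stdlib Require Import FunctionalExtensionality.
Set Implicit Arguments. Unset Strict Implicit. Unset Printing Implicit Defensive.

(* For an edge xy of the tree, diff(xy) is the number of 1-tokens that must
   cross xy, and a swap along an edge uv moves a token across uv only: the
   component T(x) of every other edge xy contains both or neither of u, v.
   Hence one swap lowers the potential sum_e diff(e) by at most one, which
   gives OPT >= potential.  Conversely, if f differs from the target h, start
   at a vertex a carrying a 1-token under f but not under h; since both have
   as many 1-tokens, some branch at a lacks 1-tokens under f, and walking into
   deficient branches ends at an edge uw with f u = 1, f w = 2 and too few
   1-tokens on the side of w.  Swapping along uw lowers the potential by
   exactly one, which gives OPT <= potential. *)

Lemma sum_ltn_exists (I : finType) (P : pred I) (F G : I -> nat) :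
  \sum_(i | P i) F i < \sum_(i | P i) G i -> exists2 i, P i & F i < G i.
Proof.
move=> ltFG; apply/exists_inP; apply: contraLR ltFG => /exists_inPn leGF.
by rewrite -leqNgt; apply: leq_sum => i /leGF; rewrite -leqNgt.
Qed.

Section Connect.
Variables (T : finType) (r : rel T).

Lemma connect_invariant (P : pred T) x y :
  (forall a b, P a -> r a b -> P b) -> P x -> connect r x y -> P y.
Proof.
move=> stepP + /connectP[p + ->]; elim: p x => //= z p IHp x Px /andP[rxz].
exact/IHp/(stepP _ _ Px rxz).
Qed.

Lemma connect_sub_on (r' : rel T) (P : pred T) x y :
  (forall a b, P a -> r a b -> P b) -> (forall a b, P a -> r a b -> r' a b) ->
  P x -> connect r x y -> connect r' x y.
Proof.
move=> stepP sub_rr' Px rxy.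
suff /andP[] : P y && connect r' x y by [].
apply: (connect_invariant (P := [pred z | P z && connect r' x z]) _ _ rxy).
  move=> a b /andP[Pa r'xa] rab /=; rewrite (stepP _ _ Pa rab).
  exact/(connect_trans r'xa)/connect1/sub_rr'.
by rewrite /= Px connect0.
Qed.

End Connect.

Section RemoveEdge.
Variables (T : finType) (e : rel T).

Lemma remove_edgeC x y : remove_edge e x y =2 remove_edge e y x.
Proof. by move=> a b; rewrite /remove_edge orbC. Qed.

Lemma remove_edge_sym x y : symmetric e -> symmetric (remove_edge e x y).
Proof.
move=> e_sym a b; rewrite /remove_edge e_sym orbC.
by rewrite [(b == x) && _]andbC [(b == y) && _]andbC.
Qed.

Lemma remove_edge_avoid x y a b :
  e a b -> a != x -> b != x -> remove_edge e x y a b.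
Proof. by move=> eab /negbTE ax /negbTE bx; rewrite /remove_edge eab ax bx andbF. Qed.

Lemma remove_edge_removed x y a b : e a b -> ~~ remove_edge e x y a b ->
  (a == x) && (b == y) || (a == y) && (b == x).
Proof. by rewrite /remove_edge => ->; rewrite negbK. Qed.

End RemoveEdge.

Section Swap.
Variable T : finType.
Implicit Types (f g : T -> nat) (A : {set T}) (u v : T).

Definition ones f := [set x | f x == 1].

Lemma ones_tperm f u v : ones (f \o tperm u v) = tperm u v @^-1: ones f.
Proof. by apply/setP => x; rewrite !inE. Qed.

Lemma card_ones_tperm_stable f u v A : (u \in A) = (v \in A) ->
  #|A :&: ones (f \o tperm u v)| = #|A :&: ones f|.
Proof.
move=> uvA; rewrite -[RHS](card_preimset _ (can_inj (tpermK u v))) preimsetI ones_tperm.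
by congr #|_ :&: _|; apply/setP => x; rewrite inE; case: tpermP => // ->.
Qed.

Lemma card_ones_tperm_cross f u v A : u \in A -> v \notin A ->
  #|A :&: ones (f \o tperm u v)| + (f u == 1) = #|A :&: ones f| + (f v == 1).
Proof.
move=> uA vA; rewrite (cardsD1 u (A :&: ones _)) (cardsD1 u (A :&: ones f)).
rewrite !inE uA /= tpermL.
suff -> : A :&: ones (f \o tperm u v) :\ u = A :&: ones f :\ u by lia.
apply/setP => x; rewrite !inE /=; case: (tpermP u v x) => [->|->|//]; first by rewrite eqxx.
by rewrite (negbTE vA) !andbF.
Qed.

Lemma card_ones_tperm_dist f u v A :
  `|#|A :&: ones (f \o tperm u v)| - #|A :&: ones f| |%N <= 1.
Proof.
case uA: (u \in A); case vA: (v \in A);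
  try by rewrite card_ones_tperm_stable ?uA ?vA // distnn.
  have := card_ones_tperm_cross f uA (negbT vA); case: (f u == 1); case: (f v == 1); lia.
rewrite tpermC; have := card_ones_tperm_cross f vA (negbT uA).
case: (f u == 1); case: (f v == 1); lia.
Qed.

Lemma eq_ones_two_coloring f g :
  (forall x, 1 <= f x <= 2) -> (forall x, 1 <= g x <= 2) -> ones f = ones g -> f = g.
Proof.
move=> f_range g_range /setP fg; apply: functional_extensionality => x.
have := fg x; rewrite !inE; have := f_range x; have := g_range x.
by case: eqP; case: eqP; lia.
Qed.

Lemma card_ones_tperm f u v : #|ones (f \o tperm u v)| = #|ones f|.
Proof. by have := @card_ones_tperm_stable f u v setT; rewrite !setTI !inE; apply. Qed.

Lemma token_placement_tperm c f u v :
  token_placement c f -> token_placement c (f \o tperm u v).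
Proof.
case=> f_range f_onto; split=> [x | i /f_onto[x fx]]; first exact: f_range.
by exists (tperm u v x); rewrite /= tpermK.
Qed.

Lemma adjacent_tperm (e : rel T) f u v : e u v -> f u != f v ->
  adjacent e f (f \o tperm u v).
Proof.
move=> euv fuv; split.
  by move/(congr1 (fun g => g u)) => /=; rewrite tpermL => /eqP; apply/negP.
exists u, v; split; rewrite //= ?tpermL ?tpermR // => w /eqP wu /eqP wv.
by rewrite tpermD // eq_sym.
Qed.

Lemma adjacentP (e : rel T) f g :
  adjacent e f g -> exists u v, e u v /\ g = f \o tperm u v.
Proof.
case=> _ [u [v [euv gu gv g_other]]]; exists u, v; split=> //.
by apply: functional_extensionality => x /=; case: tpermP => [->|->|]; last exact: g_other.
Qed.

End Swap.

Section Subtree.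
Variables (T : finType) (e : rel T).
Hypothesis tree_e : is_tree e.

Let e_sym : symmetric e. Proof. by case: tree_e => [[]]. Qed.
Let e_irr : irreflexive e. Proof. by case: tree_e => [[]]. Qed.
Let e_connected x y : connect e x y. Proof. by case: tree_e => _ []. Qed.
Let e_bridge x y : e x y -> ~~ connect (remove_edge e x y) x y.
Proof. by case: tree_e => _ [_]; apply. Qed.

Let remove_edge_csym x y : connect_sym (remove_edge e x y).
Proof. exact/sym_connect_sym/remove_edge_sym. Qed.

Definition subtree x y := [set z | connect (remove_edge e x y) x z].

Lemma subtree_refl x y : x \in subtree x y.
Proof. by rewrite inE connect0. Qed.

Lemma subtree_notin x y : e x y -> y \notin subtree x y.
Proof. by rewrite inE; apply: e_bridge. Qed.

Lemma mem_subtree_edge x y a b : remove_edge e x y a b ->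
  (a \in subtree x y) = (b \in subtree x y).
Proof. by rewrite !inE; apply: connect_closed. Qed.

Lemma subtreeC u v : e u v -> subtree v u = ~: subtree u v.
Proof.
move=> euv; have rem_vu : connect (remove_edge e v u) =2 connect (remove_edge e u v).
  exact/eq_connect/remove_edgeC.
apply/setP => z; rewrite !inE rem_vu; apply/idP/idP.
  move=> vz; apply/negP => uz; move: (e_bridge euv).
  by rewrite (connect_trans uz) // remove_edge_csym.
apply: contraNT => vz.
have : (z \in subtree u v) || (z \in subtree v u).
  apply: (connect_invariant (P := [pred y | (y \in subtree u v) || (y \in subtree v u)])
            _ _ (e_connected u z)); last by rewrite /= subtree_refl.
  move=> a b Pa eab.
  have [rab | /(remove_edge_removed eab) ab_uv] := boolP (remove_edge e u v a b).
    have rab' : remove_edge e v u a b by rewrite remove_edgeC.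
    by rewrite /= -(mem_subtree_edge rab) -(mem_subtree_edge rab').
  by case/orP: ab_uv => /andP[_ /eqP->]; rewrite /= subtree_refl ?orbT.
by rewrite !inE rem_vu (negbTE vz) orbF.
Qed.

Lemma subtree_sub u v w : e u v -> e u w -> w != v -> subtree w u \subset subtree u v.
Proof.
move=> euv euw wv; apply/subsetP => z; rewrite [z \in subtree w u]inE => wz.
have u_out : u \notin subtree w u by rewrite subtree_notin // e_sym.
have ruw : remove_edge e u v u w.
  apply: contraNT wv => /(remove_edge_removed euw).
  by case/orP=> /andP[/eqP uv /eqP->] //; rewrite -uv.
rewrite inE (connect_trans (connect1 ruw)) //.
apply: (connect_sub_on (P := [pred y | y \in subtree w u]) _ _ (subtree_refl w u) wz).
  by move=> a b /=; rewrite !inE => wa /connect1; apply: connect_trans.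
move=> a b /= wa rab; have eab : e a b by case/andP: rab.
apply: remove_edge_avoid => //; first by move: wa; apply: contraTneq => ->.
by move: wa; rewrite (mem_subtree_edge rab); apply: contraTneq => ->.
Qed.

Lemma card_subtree_lt u v w : e u v -> e u w -> w != v ->
  #|subtree w u| < #|subtree u v|.
Proof.
move=> euv euw wv; rewrite proper_card // properE subtree_sub //=.
by apply/subsetPn; exists u; rewrite ?subtree_refl // subtree_notin // e_sym.
Qed.

Lemma subtree_cover u z : z != u -> exists2 w, e u w & z \in subtree w u.
Proof.
pose near_u y := (y == u) || [exists w, e u w && (y \in subtree w u)].
have near_uI w y : e u w -> y \in subtree w u -> near_u y.
  by move=> euw wy; apply/orP; right; apply/exists_inP; exists w.
move=> zu; suff : near_u z by rewrite /near_u (negbTE zu) => /exists_inP.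
apply: (connect_invariant (P := near_u) _ _ (e_connected u z)).
  move=> a b /orP[/eqP-> eub | /exists_inP[w euw wa] eab].
    exact: near_uI (subtree_refl b u).
  have [rab | /(remove_edge_removed eab)] := boolP (remove_edge e w u a b).
    by apply: (near_uI w); rewrite -?(mem_subtree_edge rab).
  case/orP=> /andP[_ /eqP->]; first by rewrite /near_u eqxx.
  exact: near_uI (subtree_refl w u).
by rewrite /near_u eqxx.
Qed.

Lemma subtree_inj u w w' z : e u w -> e u w' ->
  z \in subtree w u -> z \in subtree w' u -> w = w'.
Proof.
move=> euw euw' wz w'z; apply/eqP; apply: contraTT w'z => ww'.
by rewrite subtreeC // in_setC negbK (subsetP (subtree_sub euw' euw _) z wz) // eq_sym.
Qed.

Lemma sum_mem_subtree u z : \sum_(w | e u w) (z \in subtree w u) = (z != u).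
Proof.
have [-> | zu] := eqVneq z u.
  by rewrite big1 // => w euw; rewrite (negbTE (subtree_notin _)) // e_sym.
have [w0 euw0 w0z] := subtree_cover zu.
rewrite (bigD1 w0) //= w0z big1 // => w /andP[euw ww0].
by apply/eqP; rewrite eqb0; apply: contra ww0 => wz; rewrite (subtree_inj euw euw0 wz w0z).
Qed.

Lemma card_subtree_partition u (S : {set T}) :
  #|S| = (u \in S) + \sum_(w | e u w) #|subtree w u :&: S|.
Proof.
have cardIE (A : {set T}) : #|A :&: S| = \sum_(z in S) (z \in A).
  rewrite -sum1_card big_mkcond [RHS]big_mkcond; apply: eq_bigr => z _.
  by rewrite inE; case: (z \in A); case: (z \in S).
rewrite (eq_bigr _ (fun w _ => cardIE _)) exchange_big /=.
rewrite (eq_bigr _ (fun z _ => sum_mem_subtree u z)) (cardsD1 u S) setDE setIC.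
by rewrite cardIE; congr (_ + _); apply: eq_bigr => z _; rewrite !inE.
Qed.

Lemma ones_in_compE x y f : ones_in_comp e x y f = #|subtree x y :&: ones f|.
Proof. by apply: eq_card => z; rewrite !inE. Qed.

Lemma ones_in_compC u v f : e u v ->
  ones_in_comp e u v f + ones_in_comp e v u f = #|ones f|.
Proof.
move=> euv; rewrite !ones_in_compE (subtreeC euv).
by rewrite -(cardsID (subtree u v) (ones f)) setDE !(setIC (ones f)).
Qed.

Lemma ones_in_comp_rec u v f : e u v ->
  ones_in_comp e u v f = (f u == 1) + \sum_(w | e u w && (w != v)) ones_in_comp e w u f.
Proof.
move=> euv; rewrite ones_in_compE (card_subtree_partition u) (bigD1 v) //=.
rewrite in_setI subtree_refl inE; congr (_ + _).
rewrite setIA [subtree v u :&: _](_ : _ = set0) ?set0I ?cards0 ?add0n.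
  apply: eq_bigr => w /andP[euw wv]; rewrite ones_in_compE setIA.
  by rewrite (setIidPl (subtree_sub euv euw wv)).
by rewrite (subtreeC euv) setIC setICr.
Qed.

Lemma improving_edge_in_subtree f h u w : e u w -> f u = 1 ->
  ones_in_comp e w u f < ones_in_comp e w u h ->
  exists u' w', [/\ e u' w', f u' = 1, f w' != 1 &
                   ones_in_comp e w' u' f < ones_in_comp e w' u' h].
Proof.
have [n] := ubnP #|subtree w u|; elim: n u w => // n IHn u w lt_n euw fu lt_fh.
have [fw | fw] := eqVneq (f w) 1; last by exists u, w.
have ewu : e w u by rewrite e_sym.
move: lt_fh; rewrite !(ones_in_comp_rec _ ewu) fw eqxx => lt_fh.
have [|z /andP[ewz zu] lt_z] := @sum_ltn_exists _ (fun z => e w z && (z != u))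
  (fun z => ones_in_comp e z w f) (fun z => ones_in_comp e z w h).
  by move: lt_fh; case: (h w == 1); lia.
apply: (IHn w z) => //; have := card_subtree_lt ewu ewz zu; lia.
Qed.

Lemma improving_edge_exists f h : #|ones f| = #|ones h| -> ones f != ones h ->
  exists u w, [/\ e u w, f u = 1, f w != 1 &
                 ones_in_comp e w u f < ones_in_comp e w u h].
Proof.
move=> card_fh fh; have [a fa ha] : exists2 a, a \in ones f & a \notin ones h.
  by apply/subsetPn; move: fh; apply: contra => sub_fh; rewrite eqEcard sub_fh card_fh /=.
have [|w euw lt_w] := @sum_ltn_exists _ (e a)
  (fun w => ones_in_comp e w a f) (fun w => ones_in_comp e w a h).
  have := card_subtree_partition a (ones f); have := card_subtree_partition a (ones h).
  rewrite fa (negbTE ha) (eq_bigr _ (fun w _ => ones_in_compE w a f)).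
  rewrite (eq_bigr _ (fun w _ => ones_in_compE w a h)); lia.
by apply: (improving_edge_in_subtree euw) lt_w; move: fa; rewrite inE => /eqP.
Qed.

Definition tree_edge (p : T * T) := e p.1 p.2 && (enum_rank p.1 < enum_rank p.2)%N.

Definition potential f h := \sum_(p | tree_edge p) diff_edge e f h p.1 p.2.

Definition edge_rep u v : T * T :=
  if (enum_rank u < enum_rank v)%N then (u, v) else (v, u).

Lemma tree_edge_rep u v : e u v -> tree_edge (edge_rep u v).
Proof.
move=> euv; rewrite /tree_edge /edge_rep; case: ltnP => /= [-> | vu]; first by rewrite euv.
rewrite e_sym euv ltn_neqAle vu andbT; apply: contraTneq euv => /val_inj/enum_rank_inj->.
by rewrite e_irr.
Qed.

Lemma remove_edge_tree_edge p u v : tree_edge p -> p != edge_rep u v -> e u v ->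
  remove_edge e p.1 p.2 u v.
Proof.
case: p => x y /andP[/= exy xy] + euv; apply: contraNT => /(remove_edge_removed euv).
rewrite /edge_rep; case/orP=> /andP[/eqP-> /eqP->]; first by rewrite xy.
by rewrite ltnNge ltnW.
Qed.

Lemma diff_edgeC f h u v : e u v -> #|ones f| = #|ones h| ->
  diff_edge e f h u v = diff_edge e f h v u.
Proof.
move=> euv card_fh; rewrite /diff_edge.
have := ones_in_compC f euv; have := ones_in_compC h euv.
move: (ones_in_comp _ u v f) (ones_in_comp _ v u f) => a b.
move: (ones_in_comp _ u v h) (ones_in_comp _ v u h) => c d; lia.
Qed.

Lemma diff_edge_rep f h u v : e u v -> #|ones f| = #|ones h| ->
  diff_edge e f h (edge_rep u v).1 (edge_rep u v).2 = diff_edge e f h u v.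
Proof.
by move=> euv card_fh; rewrite /edge_rep; case: ifP => //= _; rewrite diff_edgeC // e_sym.
Qed.

Lemma diff_edge_tperm_le f h u v x y :
  diff_edge e f h x y <= diff_edge e (f \o tperm u v) h x y + 1.
Proof.
rewrite /diff_edge !ones_in_compE; have := card_ones_tperm_dist f u v (subtree x y).
move: #|_ :&: ones (f \o _)| #|_ :&: ones f| #|_ :&: ones h| => a b c; lia.
Qed.

Lemma potential_tperm f h u v (p := edge_rep u v) : e u v ->
  potential f h + diff_edge e (f \o tperm u v) h p.1 p.2 =
  potential (f \o tperm u v) h + diff_edge e f h p.1 p.2.
Proof.
move=> euv; have p_edge : tree_edge p by exact: tree_edge_rep.
have same_off_p q : tree_edge q && (q != p) ->
    diff_edge e (f \o tperm u v) h q.1 q.2 = diff_edge e f h q.1 q.2.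
  case/andP=> q_edge qp; rewrite /diff_edge !ones_in_compE card_ones_tperm_stable //.
  exact/mem_subtree_edge/remove_edge_tree_edge.
rewrite /potential (bigD1 p p_edge) [in RHS](bigD1 p p_edge) (eq_bigr _ same_off_p).
by rewrite addnAC [RHS]addnAC [diff_edge _ (_ \o _) _ _ _ + _]addnC.
Qed.

Lemma potential_tperm_le f h u v : e u v ->
  potential f h <= potential (f \o tperm u v) h + 1.
Proof.
move=> euv; have := potential_tperm f h euv.
have := diff_edge_tperm_le f h u v (edge_rep u v).1 (edge_rep u v).2.
move: (diff_edge e f h _ _) (diff_edge e (f \o tperm u v) h _ _) => c d.
move: (potential f h) (potential (f \o tperm u v) h) => a b; lia.
Qed.

Lemma potential_tperm_improving f h u w : #|ones f| = #|ones h| ->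
  e u w -> f u = 1 -> f w != 1 ->
  ones_in_comp e w u f < ones_in_comp e w u h ->
  potential f h = (potential (f \o tperm u w) h).+1.
Proof.
move=> card_fh euw fu fw lt_fh.
have card_fth : #|ones (f \o tperm u w)| = #|ones h| by rewrite card_ones_tperm.
have := potential_tperm f h euw.
rewrite !diff_edge_rep // (diff_edgeC euw card_fh) (diff_edgeC euw card_fth) /diff_edge.
have ewu : e w u by rewrite e_sym.
have := card_ones_tperm_cross f (subtree_refl w u) (subtree_notin ewu).
rewrite -tpermC -!ones_in_compE fu (negbTE fw) eqxx; move: lt_fh.
move: (ones_in_comp e w u f) (ones_in_comp e w u (f \o _)) (ones_in_comp e w u h) => a b c.
move: (potential f h) (potential (f \o tperm u w) h) => p q; lia.
Qed.

Lemma potential_id h : potential h h = 0.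
Proof. by apply: big1 => p _; rewrite /diff_edge distnn. Qed.

Lemma potential_le_swap_seq c f h n : swap_seq c e f h n -> potential f h <= n.
Proof.
elim=> [g _ | f1 g h1 m _ /adjacentP[u [v [euv ->]]] _ IH]; first by rewrite potential_id.
by rewrite -addn1 (leq_trans (potential_tperm_le _ _ euv)) ?leq_add2r.
Qed.

Lemma swap_seq_potential f h : token_placement 2 f -> token_placement 2 h ->
  #|ones f| = #|ones h| -> swap_seq 2 e f h (potential f h).
Proof.
move=> + hh; have [n] := ubnP (potential f h); elim: n f => // n IHn f lt_n hf card_fh.
have [fh | /(improving_edge_exists card_fh) [u [w [euw fu fw lt_w]]]] :=
  eqVneq (ones f) (ones h).
  by rewrite (eq_ones_two_coloring hf.1 hh.1 fh) potential_id; apply: swap_nil.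
rewrite (potential_tperm_improving card_fh euw fu fw lt_w).
apply: (swap_cons hf (adjacent_tperm euw _)); first by rewrite fu eq_sym.
apply: IHn; [|exact: token_placement_tperm | by rewrite card_ones_tperm].
by move: lt_n; rewrite (potential_tperm_improving card_fh euw fu fw lt_w).
Qed.

End Subtree.

Theorem mainTheorem9 (T : finType) (e : rel T) (f0 ft : T -> nat) :
  is_tree e ->
  token_placement 2 f0 -> token_placement 2 ft ->
  #|[set v | f0 v == 1]| = #|[set v | ft v == 1]| ->
  is_OPT 2 e f0 ft
    (\sum_(p : T * T | e p.1 p.2 && (enum_rank p.1 < enum_rank p.2)%N)
        diff_edge e f0 ft p.1 p.2)%N.
Proof.
move=> tree_e f0_tp ft_tp card_f0t; split; first exact: swap_seq_potential.
by move=> m; apply: potential_le_swap_seq.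
Qed.
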